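(* Let $X_o$ be a compact Hausdorff space, $\theta$ a homeomorphism of $X_o$ such that $(X_o,\theta)$ is uniquely ergodic with invariant measure $\mu_o$, $f\in C(X_o;\mathbb{T})$, and $\Phi_{\theta,f}(x,w):=(\theta(x),f(x)w)$ acting on $C(X_o\times\mathbb{T})$ by $h\mapsto h\circ\Phi_{\theta,f}$. Suppose $(C(X_o\times\mathbb{T}),\Phi_{\theta,f})$ is uniquely ergodic with respect to the fixed-point subalgebra and that $C(X_o\times\mathbb{T})^{\Phi_{\theta,f}}\ne\mathbb{C}1$; let $\rho:C(X_o\times\mathbb{T})^{\Phi_{\theta,f}}\to C(\mathbb{T})$ be a $*$-isomorphism, and $E^{\Phi_{\theta,f}}$ the unique $\Phi_{\theta,f}$-invariant conditional expectation of $C(X_o\times\mathbb{T})$ onto $C(X_o\times\mathbb{T})^{\Phi_{\theta,f}}$. Then the map $T(\mu):=\mu\circ\rho\circ E^{\Phi_{\theta,f}}$ is an affine bijection from the set $\mathcal{P}(\mathbb{T})$ of regular Borel probability measures on $\mathbb{T}$ (viewed as states on $C(\mathbb{T})$) onto the set of $\Phi_{\theta,f}$-invariant regular Borel probability measures on $X_o\times\mathbb{T}$.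
   Context: A system $(\mathfrak{B},\beta)$ is uniquely ergodic with respect to the fixed-point subalgebra if the Ces\`aro averages $\frac1n\sum_{k=0}^{n-1}\beta^k(x)$ converge in norm for every $x\in\mathfrak{B}$; equivalently every state on $\mathfrak{B}^\beta$ has a unique $\beta$-invariant state extension to $\mathfrak{B}$; in this case the limit defines a $\beta$-invariant conditional expectation onto $\mathfrak{B}^\beta$. Under the hypotheses, the fixed-point subalgebra is $*$-isomorphic to $C(\mathbb{T})$. Measures are identified with states via the Riesz–Markov theorem. *)

From HB Require Import structures.
From mathcomp Require Import all_boot all_order all_algebra.
From mathcomp Require Import all_classical all_reals all_analysis.
From mathcomp Require Import complex.
Import Order.TTheory GRing.Theory Num.Theory.
Import numFieldNormedType.Exports numFieldTopology.Exports.

Set Implicit Arguments.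
Unset Strict Implicit.
Unset Printing Implicit Defensive.

Local Open Scope ring_scope.
Local Open Scope classical_set_scope.

HB.instance Definition _ (R : rcfType) :=
  PseudoPointedMetric.copy (complex R) (complex R)^o.

Section Defs.
Variable R : realType.
Local Notation C := (R[i]).

Definition Circle : topologicalType := set_type [set z : C | `|z| = 1].

Lemma circle_mul_subproof (a b : Circle) :
  [set z : C | `|z| = 1] (set_val a * set_val b).
Proof.
have /set_mem Ha := valP a; have /set_mem Hb := valP b.
by rewrite /= normrM Ha Hb mulr1.
Qed.

Definition circle_mul (a b : Circle) : Circle :=
  @exist _ (fun z => z \in [set z : C | `|z| = 1]) (set_val a * set_val b)
    (mem_set (circle_mul_subproof a b)).

Definition skew_product (X : Type) (theta : X -> X) (f : X -> Circle)
    (p : X * Circle) : X * Circle :=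
  (theta p.1, circle_mul (f p.1) p.2).

Definition Cfun (Y : topologicalType) := {h : Y -> C | continuous h}.

(* States on C(Y) = positive unital linear functionals
   (identified with regular Borel probability measures by Riesz-Markov).
   Operations on C(Y) are taken pointwise. *)
Definition is_state (Y : topologicalType) (phi : Cfun Y -> C) : Prop :=
  [/\ (forall (h1 h2 : Y -> C) (c1 : continuous h1) (c2 : continuous h2)
          (c : continuous (fun y => h1 y + h2 y)),
          phi (exist _ _ c) = phi (exist _ _ c1) + phi (exist _ _ c2)),
      (forall (a : C) (h : Y -> C) (c1 : continuous h)
          (c : continuous (fun y => a * h y)),
          phi (exist _ _ c) = a * phi (exist _ _ c1)),
      (forall (h : Y -> C) (c : continuous h),
          (forall y, 0 <= h y) -> 0 <= phi (exist _ _ c)) &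
      (forall c : continuous (fun _ : Y => 1 : C), phi (exist _ _ c) = 1)].

Definition is_invariant (Y : topologicalType) (F : Y -> Y)
    (phi : Cfun Y -> C) : Prop :=
  forall (h : Y -> C) (c : continuous h) (c' : continuous (h \o F)),
    phi (exist _ _ c') = phi (exist _ _ c).

Definition uniquely_ergodic_with (Y : topologicalType) (F : Y -> Y)
    (mu : Cfun Y -> C) : Prop :=
  [/\ is_state mu, is_invariant F mu &
      forall nu, is_state nu -> is_invariant F nu -> nu = mu].

Definition cesaro (Y : Type) (F : Y -> Y) (h : Y -> C) (n : nat) (y : Y) : C :=
  (n%:R)^-1 * \sum_(k < n) h (iter k F y).

Definition cesaro_unif_cvg (Y : Type) (F : Y -> Y) (h g : Y -> C) : Prop :=
  forall e : C, 0 < e -> \forall n \near \oo, forall y, `|cesaro F h n y - g y| < e.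

Definition FixAlg (Y : topologicalType) (F : Y -> Y) :=
  {h : Y -> C | continuous h /\ h \o F = h}.

Definition is_star_iso (Y Z : topologicalType) (F : Y -> Y)
    (rho : FixAlg F -> Cfun Z) : Prop :=
  bijective rho /\
  [/\ (forall (h1 h2 : Y -> C) (c1 : continuous h1 /\ h1 \o F = h1)
          (c2 : continuous h2 /\ h2 \o F = h2)
          (c : continuous (fun y => h1 y + h2 y) /\ (fun y => h1 y + h2 y) \o F = (fun y => h1 y + h2 y)),
          sval (rho (exist _ _ c)) = (fun z => sval (rho (exist _ _ c1)) z + sval (rho (exist _ _ c2)) z)),
      (forall (a : C) (h : Y -> C) (c1 : continuous h /\ h \o F = h)
          (c : continuous (fun y => a * h y) /\ (fun y => a * h y) \o F = (fun y => a * h y)),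
          sval (rho (exist _ _ c)) = (fun z => a * sval (rho (exist _ _ c1)) z)),
      (forall (h1 h2 : Y -> C) (c1 : continuous h1 /\ h1 \o F = h1)
          (c2 : continuous h2 /\ h2 \o F = h2)
          (c : continuous (fun y => h1 y * h2 y) /\ (fun y => h1 y * h2 y) \o F = (fun y => h1 y * h2 y)),
          sval (rho (exist _ _ c)) = (fun z => sval (rho (exist _ _ c1)) z * sval (rho (exist _ _ c2)) z)),
      (forall (h : Y -> C) (c1 : continuous h /\ h \o F = h)
          (c : continuous (fun y => (h y)^*) /\ (fun y => (h y)^*) \o F = (fun y => (h y)^*)),
          sval (rho (exist _ _ c)) = (fun z => (sval (rho (exist _ _ c1)) z)^*)) &
      (forall c : continuous (fun _ : Y => 1 : C) /\ (fun _ : Y => 1 : C) \o F = (fun _ => 1),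
          sval (rho (exist _ _ c)) = (fun _ => 1))].

Definition Tmap (Y Z : topologicalType) (F : Y -> Y)
    (rho : FixAlg F -> Cfun Z) (E : Cfun Y -> FixAlg F)
    (mu : Cfun Z -> C) : Cfun Y -> C :=
  fun h => mu (rho (E h)).

End Defs.

(* Let F be a continuous map of a topological space Y, E : C(Y) -> C(Y)^F the
   limit of the Cesaro averages (1/n) sum_{k<n} h o F^k (uniform convergence
   is assumed), and rho : C(Y)^F -> C(Z) a *-isomorphism onto C(Z).  The proof rests on three facts:
   - E is linear, positive, F-invariant and the identity on C(Y)^F, since
     these properties pass to the pointwise limit of the averages;
   - an invariant state psi satisfies psi (E h) = psi h: psi takes the same
     value on h and on its averages, and states are continuous for the
     sup-norm (|psi h| <= 2 sup |h|);
   - rho and rho^-1 are positive: a unital algebra morphism maps invertible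
     elements to invertible elements, so every value of rho a is a value of
     a (and similarly for rho^-1).
   Then T mu is an invariant state, mu is recovered from T mu on C(Y)^F, and
   an invariant state psi equals T (psi o rho^-1). *)

From Pilot Require Import Defs.
From HB Require Import structures.
From mathcomp Require Import all_boot all_order all_algebra.
From mathcomp Require Import all_classical all_reals all_analysis.
From mathcomp Require Import complex.
Import Order.TTheory GRing.Theory Num.Theory.
Import numFieldNormedType.Exports numFieldTopology.Exports.

Local Open Scope ring_scope.
Local Open Scope classical_set_scope.

Section ComplexContinuity.
Context {R : realType} {Y : topologicalType}.
Local Notation C := (R[i]).
Implicit Types (u v : Y -> C).

Lemma continuous_addC {u v} : continuous u -> continuous v ->
  continuous (fun y => u y + v y).
Proof. by move=> cu cv y; apply: (@cvgD _ C^o); [exact: cu | exact: cv]. Qed.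

Lemma continuous_mulC {u v} : continuous u -> continuous v ->
  continuous (fun y => u y * v y).
Proof. by move=> cu cv y; apply: (@cvgM C); [exact: cu | exact: cv]. Qed.

Lemma continuous_oppC {u} : continuous u -> continuous (fun y => - u y).
Proof. by move=> cu y; apply: (@cvgN _ C^o); exact: cu. Qed.

Lemma continuous_invC {u} : continuous u -> (forall y, u y != 0) ->
  continuous (fun y => (u y)^-1).
Proof. by move=> cu u0 y; apply: (@cvgV C) => //; exact: cu. Qed.

Lemma continuous_conjC {u} : continuous u -> continuous (fun y => (u y)^*).
Proof.
move=> cu y; apply/(@cvgrPdist_lt _ C^o _ _ _ (fun z => (u z)^*) (u y)^*) => e e0.
have near_u := (@cvgrPdist_lt _ C^o _ _ _ u (u y)).1 (cu y) e e0.
near=> z; rewrite -rmorphB norm_conjC; near: z; exact: near_u.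
Unshelve. all: by end_near.
Qed.

Lemma continuous_cstC (a : C) : continuous (fun _ : Y => a).
Proof. exact: cst_continuous. Qed.

Lemma continuous_ReC {u} : continuous u -> continuous (fun y => 'Re (u y)).
Proof.
move=> cu; have -> : (fun y => 'Re (u y)) = (fun y => (u y + (u y)^*) * 2%:R^-1).
  by apply: funext => y; rewrite ReE.
exact: continuous_mulC (continuous_addC cu (continuous_conjC cu)) (continuous_cstC _).
Qed.

Lemma continuous_ImC {u} : continuous u -> continuous (fun y => 'Im (u y)).
Proof.
move=> cu; have -> : (fun y => 'Im (u y)) = (fun y => - 'Re ('i * u y)).
  by apply: funext => y; rewrite ReMil opprK.
exact: continuous_oppC (continuous_ReC (continuous_mulC (continuous_cstC _) cu)).
Qed.
End ComplexContinuity.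

Lemma cfun_eq (R : realType) (Y : topologicalType) (a b : Cfun R Y) :
  sval a = sval b -> a = b.
Proof. by apply: eq_sig_hprop => h p q; exact: Prop_irrelevance. Qed.

(* States on C(Y), with each axiom restated for an element s whose underlying
   function is given by an equation, so that no continuity proof needs to be
   matched syntactically. *)
Section States.
Context {R : realType} {Y : topologicalType} {psi : Cfun R Y -> R[i]}.
Local Notation C := (R[i]).
Hypothesis psi_state : is_state psi.

Lemma state_add (a b s : Cfun R Y) :
  sval s = (fun y => sval a y + sval b y) -> psi s = psi a + psi b.
Proof.
case: psi_state => add _ _ _; case: a b s => [u cu] [v cv] [w cw] /= eq_w.
by subst w; exact: add.
Qed.

Lemma state_scale (c : C) (a s : Cfun R Y) :
  sval s = (fun y => c * sval a y) -> psi s = c * psi a.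
Proof.
case: psi_state => _ scale _ _; case: a s => [u cu] [w cw] /= eq_w.
by subst w; exact: scale.
Qed.

Lemma state_ge0 (s : Cfun R Y) : (forall y, 0 <= sval s y) -> 0 <= psi s.
Proof. by case: psi_state => _ _ pos _; case: s => u cu; exact: pos. Qed.

Lemma state_cst (c : C) (s : Cfun R Y) : sval s = (fun _ => c) -> psi s = c.
Proof.
case: psi_state => _ _ _ one eq_s.
pose one_fn : Cfun R Y := exist _ _ (continuous_cstC (Y:=Y) 1).
rewrite (state_scale c one_fn); first by rewrite one mulr1.
by rewrite eq_s; apply: funext => y; rewrite mulr1.
Qed.

Lemma state_sub (a b s : Cfun R Y) :
  sval s = (fun y => sval a y - sval b y) -> psi s = psi a - psi b.
Proof.
move=> eq_s; pose nb : Cfun R Y := exist _ _ (continuous_oppC (proj2_sig b)).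
rewrite (state_add a nb) //; congr (_ + _).
by rewrite (state_scale (-1) b) ?mulN1r //; apply: funext => y; rewrite mulN1r.
Qed.

(* On real-valued functions a state is bounded by the sup-norm: this follows
   from positivity applied to e - s and e + s. *)
Lemma state_real_bound (s : Cfun R Y) (e : C) :
  (forall y, sval s y \is Num.real) -> (forall y, `|sval s y| <= e) ->
  `|psi s| <= e.
Proof.
move=> s_real s_le.
have ce := continuous_cstC (Y:=Y) e; pose e_fn : Cfun R Y := exist _ _ ce.
pose e_sub_s : Cfun R Y := exist _ _ (continuous_addC ce (continuous_oppC (proj2_sig s))).
pose e_add_s : Cfun R Y := exist _ _ (continuous_addC ce (proj2_sig s)).
have le_e : 0 <= e - psi s.
  rewrite -(state_cst e e_fn) // -(state_sub e_fn s e_sub_s) //.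
  by apply: state_ge0 => y /=; rewrite subr_ge0; exact: real_ler_normlW (s_le y).
have ge_e : 0 <= e + psi s.
  rewrite -(state_cst e e_fn) // -(state_add e_fn s e_add_s) //.
  apply: state_ge0 => y /=; have := s_le y; rewrite (real_ler_norml _ (s_real y)).
  by case/andP=> ge_ne _; rewrite addrC -(opprK e) subr_ge0.
have psi_real : psi s \is Num.real.
  have -> : psi s = ((e + psi s) - (e - psi s)) / 2%:R.
    by rewrite opprB [e + _]addrC -addrA (addrCA e) subrr addr0 mulrDl -splitr.
  apply: realM; first by apply: realB; exact: ger0_real.
  by apply: ger0_real; rewrite invr_ge0 ler0n.
rewrite (real_ler_norml _ psi_real); apply/andP; split.
  by rewrite -subr_ge0 opprK addrC.
by rewrite -subr_ge0.
Qed.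

(* On complex functions the bound holds up to a factor 2 (real and imaginary
   parts are estimated separately). *)
Lemma state_norm_bound (s : Cfun R Y) (e : C) :
  (forall y, `|sval s y| <= e) -> `|psi s| <= e *+ 2.
Proof.
move=> s_le.
pose re : Cfun R Y := exist _ _ (continuous_ReC (proj2_sig s)).
pose im : Cfun R Y := exist _ _ (continuous_ImC (proj2_sig s)).
pose i_im : Cfun R Y :=
  exist _ _ (continuous_mulC (continuous_cstC (Y:=Y) 'i) (proj2_sig im)).
have re_le : `|psi re| <= e.
  apply: state_real_bound => y; first exact: Creal_Re.
  exact: le_trans (leif_normC_Re_Creal _).1 (s_le y).
have im_le : `|psi im| <= e.
  apply: state_real_bound => y; first exact: Creal_Im.
  apply: le_trans (s_le y); rewrite /= -[X in `|X| <= _]opprK -ReMil normrN.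
  by apply: le_trans (leif_normC_Re_Creal _).1 _; rewrite normrM normCi mul1r.
rewrite (state_add re i_im); last by apply: funext => y; rewrite /= -Crect.
rewrite (state_scale 'i im i_im) // mulr2n; apply: le_trans (ler_normD _ _) _.
by rewrite normrM normCi mul1r lerD.
Qed.
End States.

Section FixedPointAlgebra.
Context {R : realType} {Y : topologicalType} {F : Y -> Y}.
Local Notation C := (R[i]).
Local Notation A := (FixAlg R F).

Lemma fixalg_eq (a b : A) : sval a = sval b -> a = b.
Proof. by apply: eq_sig_hprop => h p q; exact: Prop_irrelevance. Qed.

Lemma fixalg_comp (a : A) y : sval a (F y) = sval a y.
Proof. exact: (congr1 (fun g => g y) (proj2 (proj2_sig a))). Qed.

Lemma fixalg_iter (a : A) k y : sval a (iter k F y) = sval a y.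
Proof. by elim: k => [|k IH] //=; rewrite fixalg_comp. Qed.

Definition fix_fun (a : A) : Cfun R Y := exist _ (sval a) (proj1 (proj2_sig a)).

Definition fixalg_cst (c : C) : A :=
  exist _ (fun _ => c) (conj (continuous_cstC c) erefl).

Definition fixalg_add (a b : A) : A :=
  exist _ (fun y => sval a y + sval b y)
    (conj (continuous_addC (proj1 (proj2_sig a)) (proj1 (proj2_sig b)))
       (funext (fun y => congr2 +%R (fixalg_comp a y) (fixalg_comp b y)))).

Definition fixalg_mul (a b : A) : A :=
  exist _ (fun y => sval a y * sval b y)
    (conj (continuous_mulC (proj1 (proj2_sig a)) (proj1 (proj2_sig b)))
       (funext (fun y => congr2 *%R (fixalg_comp a y) (fixalg_comp b y)))).

Definition fixalg_inv (a : A) (a_neq0 : forall y, sval a y != 0) : A :=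
  exist _ (fun y => (sval a y)^-1)
    (conj (continuous_invC (proj1 (proj2_sig a)) a_neq0)
       (funext (fun y => congr1 GRing.inv (fixalg_comp a y)))).
End FixedPointAlgebra.

Section CesaroAverages.
Context {R : realType} {Y : topologicalType} {F : Y -> Y}.
Local Notation C := (R[i]).
Local Notation cesaro := (Defs.cesaro F).

Lemma cesaro_add (u v : Y -> C) n y :
  cesaro (fun x => u x + v x) n y = cesaro u n y + cesaro v n y.
Proof. by rewrite /Defs.cesaro big_split mulrDr. Qed.

Lemma cesaro_scale (c : C) (u : Y -> C) n y :
  cesaro (fun x => c * u x) n y = c * cesaro u n y.
Proof. by rewrite /Defs.cesaro -mulr_sumr mulrCA. Qed.

Lemma cesaro_ge0 (u : Y -> C) n y : (forall x, 0 <= u x) -> 0 <= cesaro u n y.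
Proof.
move=> u_ge0; rewrite /Defs.cesaro mulr_ge0 ?invr_ge0 ?ler0n //.
by apply: sumr_ge0 => k _; exact: u_ge0.
Qed.

Lemma cesaro_comp (u : Y -> C) n y : cesaro (u \o F) n y = cesaro u n (F y).
Proof.
rewrite /Defs.cesaro; congr (_ * _); apply: eq_bigr => k _.
by rewrite /= -iterSr iterS.
Qed.

Lemma cesaro_fixed (a : FixAlg R F) n y :
  (0 < n)%N -> cesaro (sval a) n y = sval a y.
Proof.
move=> n_gt0; rewrite /Defs.cesaro; under eq_bigr do rewrite fixalg_iter.
rewrite sumr_const card_ord -[X in _ * X]mulr_natl mulrA mulVf ?mul1r //.
by rewrite pnatr_eq0 -lt0n.
Qed.

Section Continuity.
Hypothesis F_cont : continuous F.

Lemma iter_continuous k : continuous (iter k F).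
Proof.
elim: k => [|k IH] y /=; first exact: cvg_id.
exact: continuous_comp (IH y) (F_cont _).
Qed.

Lemma continuous_comp_iter {u : Y -> C} k : continuous u ->
  continuous (fun y => u (iter k F y)).
Proof. by move=> cu y; exact: continuous_comp (iter_continuous k y) (cu _). Qed.

Lemma orbit_sum_continuous {u : Y -> C} n : continuous u ->
  continuous (fun y => \sum_(k < n) u (iter k F y)).
Proof.
move=> cu; elim: n => [|n IH].
  by under eq_fun do rewrite big_ord0; exact: continuous_cstC.
under eq_fun do rewrite big_ord_recr /=.
exact: continuous_addC IH (continuous_comp_iter n cu).
Qed.

Lemma cesaro_continuous {u : Y -> C} n : continuous u -> continuous (cesaro u n).
Proof.
move=> cu; rewrite /Defs.cesaro.
exact: continuous_mulC (continuous_cstC _) (orbit_sum_continuous n cu).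
Qed.
End Continuity.
End CesaroAverages.

Section InvariantStates.
Context {R : realType} {Y : topologicalType} {F : Y -> Y} {psi : Cfun R Y -> R[i]}.
Local Notation cesaro := (Defs.cesaro F).
Hypotheses (F_cont : continuous F) (psi_state : is_state psi)
  (psi_inv : is_invariant F psi).

Lemma state_comp (s t : Cfun R Y) : sval t = sval s \o F -> psi t = psi s.
Proof. by case: s t => [u cu] [v cv] /= eq_v; subst v; exact: psi_inv. Qed.

Lemma state_comp_iter (s t : Cfun R Y) k :
  sval t = sval s \o iter k F -> psi t = psi s.
Proof.
elim: k t => [|k IH] t eq_t; first by congr psi; apply: cfun_eq.
pose s_k : Cfun R Y := exist _ _ (continuous_comp_iter F_cont k (proj2_sig s)).
rewrite (state_comp s_k); first exact: IH.
by rewrite eq_t; apply: funext => y; rewrite /= -iterS iterSr.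
Qed.

Lemma state_orbit_sum (s t : Cfun R Y) n :
  sval t = (fun y => \sum_(k < n) sval s (iter k F y)) -> psi t = n%:R * psi s.
Proof.
elim: n t => [|n IH] t eq_t.
  rewrite mul0r; apply: (state_cst psi_state).
  by rewrite eq_t; under eq_fun do rewrite big_ord0.
pose t_n : Cfun R Y := exist _ _ (orbit_sum_continuous F_cont n (proj2_sig s)).
pose s_n : Cfun R Y := exist _ _ (continuous_comp_iter F_cont n (proj2_sig s)).
rewrite (state_add psi_state t_n s_n); last first.
  by rewrite eq_t; under eq_fun do rewrite big_ord_recr.
by rewrite (IH t_n) // (state_comp_iter s s_n n) // -natr1 mulrDl mul1r.
Qed.

Lemma state_cesaro (s t : Cfun R Y) n : (0 < n)%N ->
  sval t = cesaro (sval s) n -> psi t = psi s.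
Proof.
move=> n_gt0 eq_t.
pose t_sum : Cfun R Y := exist _ _ (orbit_sum_continuous F_cont n (proj2_sig s)).
rewrite (state_scale psi_state n%:R^-1 t_sum) // (state_orbit_sum s t_sum n) //.
by rewrite mulKf // pnatr_eq0 -lt0n.
Qed.
End InvariantStates.

Section Expectation.
Context {R : realType} {Y : topologicalType} {F : Y -> Y}.
Local Notation C := (R[i]).
Local Notation cesaro := (Defs.cesaro F).
Context {E : Cfun R Y -> FixAlg R F}.
Hypothesis E_cesaro : forall h : Cfun R Y, cesaro_unif_cvg F (sval h) (sval (E h)).

Lemma E_cvg (h : Cfun R Y) y :
  (fun n => cesaro (sval h) n y : C^o) @ \oo --> (sval (E h) y : C^o).
Proof.
apply/(@cvgrPdist_lt _ C^o) => e e0.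
by move: (E_cesaro h e e0); apply: filterS => n /(_ y); rewrite distrC.
Qed.

Lemma E_lim (h : Cfun R Y) y (c : C) :
  (fun n => cesaro (sval h) n y : C^o) @ \oo --> (c : C^o) -> sval (E h) y = c.
Proof. exact/(cvg_unique (@norm_hausdorff _ C^o))/E_cvg. Qed.

Lemma E_add (a b s : Cfun R Y) : sval s = (fun y => sval a y + sval b y) ->
  sval (E s) = (fun y => sval (E a) y + sval (E b) y).
Proof.
move=> eq_s; apply: funext => y; apply: E_lim.
under eq_fun do rewrite eq_s cesaro_add.
exact: cvgD (E_cvg a y) (E_cvg b y).
Qed.

Lemma E_scale (c : C) (a s : Cfun R Y) : sval s = (fun y => c * sval a y) ->
  sval (E s) = (fun y => c * sval (E a) y).
Proof.
move=> eq_s; apply: funext => y; apply: E_lim.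
under eq_fun do rewrite eq_s cesaro_scale.
exact: (@cvgM C _ _ _ (fun=> c) _ c _ (cvg_cst c) (E_cvg a y)).
Qed.

Lemma E_ge0 (h : Cfun R Y) :
  (forall y, 0 <= sval h y) -> forall y, 0 <= sval (E h) y.
Proof.
move=> h_ge0 y; rewrite ger0_def -subr_eq0; apply/eqP.
have norm_cvg : (fun n => `|cesaro (sval h) n y| - cesaro (sval h) n y : C^o) @ \oo
    --> (`|sval (E h) y| - sval (E h) y : C^o).
  apply: cvgB; last exact: E_cvg.
  exact: cvg_comp (E_cvg h y) (@norm_continuous C C^o _).
apply: (cvg_unique (@norm_hausdorff _ C^o) norm_cvg); apply: cvg_near_cst.
by apply: nearW => n; apply/eqP; rewrite subr_eq0 -ger0_def cesaro_ge0.
Qed.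

Lemma E_fixed (a : FixAlg R F) (h : Cfun R Y) : sval h = sval a -> E h = a.
Proof.
move=> eq_h; apply: fixalg_eq; apply: funext => y; apply: E_lim.
apply: cvg_near_cst; near=> n; rewrite eq_h cesaro_fixed //.
by near: n; exact: nbhs_infty_gt.
Unshelve. all: by end_near.
Qed.

Lemma E_comp (h h' : Cfun R Y) : sval h' = sval h \o F -> E h' = E h.
Proof.
move=> eq_h'; apply: fixalg_eq; apply: funext => y; apply: E_lim.
under eq_fun do rewrite eq_h' cesaro_comp.
by rewrite -(fixalg_comp (E h) y); exact: E_cvg.
Qed.

(* Passing to the limit in state_cesaro: an invariant state factors through E. *)
Lemma state_E (psi : Cfun R Y -> C) : continuous F -> is_state psi ->
  is_invariant F psi -> forall h : Cfun R Y, psi (fix_fun (E h)) = psi h.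
Proof.
move=> F_cont psi_state psi_inv h.
apply/eqP; rewrite -subr_eq0 -normr_le0; apply/ler_addgt0Pr => e e_gt0.
rewrite add0r; have e2_gt0 : 0 < e / 2%:R by rewrite divr_gt0 ?ltr0n.
have [n [close_n n_gt0]] :=
  filter_ex (filterI (E_cesaro h _ e2_gt0) (nbhs_infty_gt 0)).
pose ces_n : Cfun R Y := exist _ _ (cesaro_continuous F_cont n (proj2_sig h)).
pose diff : Cfun R Y := exist _ _
  (continuous_addC (proj1 (proj2_sig (E h))) (continuous_oppC (proj2_sig ces_n))).
rewrite -(state_cesaro F_cont psi_state psi_inv h ces_n n n_gt0) //.
rewrite -(state_sub psi_state (fix_fun (E h)) ces_n diff) //.
rewrite [e]splitr -mulr2n; apply: (state_norm_bound psi_state) => y.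
by rewrite distrC; exact: ltW (close_n y).
Qed.
End Expectation.

Section StarIsomorphism.
Context {R : realType} {Y Z : topologicalType} {F : Y -> Y}.
Local Notation C := (R[i]).
Local Notation A := (FixAlg R F).
Context {rho : A -> Cfun R Z}.
Hypothesis rho_iso : is_star_iso rho.

Lemma rho_add (a b s : A) : sval s = (fun y => sval a y + sval b y) ->
  sval (rho s) = (fun z => sval (rho a) z + sval (rho b) z).
Proof.
case: rho_iso => _ [add _ _ _ _]; case: a b s => [u pu] [v pv] [w pw] /= eq_w.
by subst w; exact: add.
Qed.

Lemma rho_scale (c : C) (a s : A) : sval s = (fun y => c * sval a y) ->
  sval (rho s) = (fun z => c * sval (rho a) z).
Proof.
case: rho_iso => _ [_ scale _ _ _]; case: a s => [u pu] [w pw] /= eq_w.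
by subst w; exact: scale.
Qed.

Lemma rho_mul (a b s : A) : sval s = (fun y => sval a y * sval b y) ->
  sval (rho s) = (fun z => sval (rho a) z * sval (rho b) z).
Proof.
case: rho_iso => _ [_ _ mul _ _]; case: a b s => [u pu] [v pv] [w pw] /= eq_w.
by subst w; exact: mul.
Qed.

Lemma rho_one (s : A) : sval s = (fun _ => 1) -> sval (rho s) = (fun _ => 1).
Proof.
case: rho_iso => _ [_ _ _ _ one]; case: s => [w pw] /= eq_w.
by subst w; exact: one.
Qed.

Lemma rho_cst (c : C) (s : A) :
  sval s = (fun _ => c) -> sval (rho s) = (fun _ => c).
Proof.
move=> eq_s; rewrite (rho_scale c (fixalg_cst 1) s); last first.
  by rewrite eq_s; apply: funext => y; rewrite mulr1.
by rewrite (rho_one (fixalg_cst 1)) //; apply: funext => z; rewrite mulr1.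
Qed.

(* If w were not a
   value of a, then a - w would be invertible in C(Y)^F, hence so would be
   rho a - w, which vanishes where rho a takes the value w. *)
Lemma rho_value (a : A) z : exists y, sval (rho a) z = sval a y.
Proof.
apply/not_existsP => not_value; set w := sval (rho a) z.
pose a_w := fixalg_add a (fixalg_cst (- w)).
have a_w_neq0 y : sval a_w y != 0.
  by rewrite /= subr_eq0; apply/eqP => eq_w; apply: (not_value y).
pose a_w_inv := fixalg_inv a_w a_w_neq0.
have rho_prod : sval (rho (fixalg_mul a_w a_w_inv)) = (fun _ => 1).
  by apply: rho_one; apply: funext => y; exact: mulfV (a_w_neq0 y).
move: (congr1 (fun g => g z) rho_prod).
rewrite (rho_mul a_w a_w_inv) // (rho_add a (fixalg_cst (- w)) a_w) //.
rewrite (rho_cst (- w) (fixalg_cst (- w))) //= subrr mul0r.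
by move/eqP; rewrite eq_sym oner_eq0.
Qed.

Lemma rho_ge0 (a : A) : (forall y, 0 <= sval a y) -> forall z, 0 <= sval (rho a) z.
Proof. by move=> a_ge0 z; have [y ->] := rho_value a z. Qed.

Section InverseIsomorphism.
Variable rinv : Cfun R Z -> A.
Hypotheses (rhoK : cancel rho rinv) (rinvK : cancel rinv rho).

Lemma rho_inj (a b : A) : sval (rho a) = sval (rho b) -> a = b.
Proof. by move=> eq_ab; apply: (can_inj rhoK); exact: cfun_eq. Qed.

Lemma rinv_eq (g : Cfun R Z) (a : A) : sval (rho a) = sval g -> rinv g = a.
Proof. by move=> eq_a; apply: rho_inj; rewrite rinvK eq_a. Qed.

Lemma rinv_add (g1 g2 g : Cfun R Z) :
  sval g = (fun z => sval g1 z + sval g2 z) ->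
  sval (rinv g) = (fun y => sval (rinv g1) y + sval (rinv g2) y).
Proof.
move=> eq_g; rewrite (rinv_eq g (fixalg_add (rinv g1) (rinv g2))) //.
by rewrite (rho_add (rinv g1) (rinv g2)) // !rinvK eq_g.
Qed.

Lemma rinv_scale (c : C) (g1 g : Cfun R Z) :
  sval g = (fun z => c * sval g1 z) ->
  sval (rinv g) = (fun y => c * sval (rinv g1) y).
Proof.
move=> eq_g; rewrite (rinv_eq g (fixalg_mul (fixalg_cst c) (rinv g1))) //.
rewrite (rho_mul (fixalg_cst c) (rinv g1)) // (rho_cst c (fixalg_cst c)) //.
by rewrite rinvK eq_g.
Qed.

Lemma rinv_one (g : Cfun R Z) :
  sval g = (fun _ => 1) -> sval (rinv g) = (fun _ => 1).
Proof.
by move=> eq_g; rewrite (rinv_eq g (fixalg_cst 1)) // (rho_one (fixalg_cst 1)) ?eq_g.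
Qed.

Lemma rinv_value (g : Cfun R Z) y : exists z, sval (rinv g) y = sval g z.
Proof.
apply/not_existsP => not_value; set w := sval (rinv g) y.
have g_w_neq0 z : sval g z - w != 0.
  by rewrite subr_eq0; apply/eqP => eq_w; apply: (not_value z).
pose g_w_inv : Cfun R Z := exist _ _
  (continuous_invC (continuous_addC (proj2_sig g) (continuous_cstC (- w))) g_w_neq0).
pose a_w := fixalg_add (rinv g) (fixalg_cst (- w)).
have prod_one : fixalg_mul a_w (rinv g_w_inv) = fixalg_cst 1.
  apply: rho_inj; rewrite (rho_mul a_w (rinv g_w_inv)) // (rho_one (fixalg_cst 1)) //.
  rewrite (rho_add (rinv g) (fixalg_cst (- w)) a_w) //.
  rewrite (rho_cst (- w) (fixalg_cst (- w))) //.
  by rewrite !rinvK; apply: funext => z; exact: mulfV.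
move: (congr1 (fun a : A => sval a y) prod_one).
by rewrite /= subrr mul0r => /eqP; rewrite eq_sym oner_eq0.
Qed.

Lemma rinv_ge0 (g : Cfun R Z) :
  (forall z, 0 <= sval g z) -> forall y, 0 <= sval (rinv g) y.
Proof. by move=> g_ge0 y; have [z ->] := rinv_value g y. Qed.

Lemma rinv_state (psi : Cfun R Y -> C) : is_state psi ->
  is_state (fun g => psi (fix_fun (rinv g))).
Proof.
move=> psi_state; split.
- move=> h1 h2 c1 c2 c; apply: (state_add psi_state) => /=.
  exact: (rinv_add (exist _ h1 c1) (exist _ h2 c2) (exist _ _ c)).
- move=> c h c1 ch; apply: (state_scale psi_state c) => /=.
  exact: (rinv_scale c (exist _ h c1) (exist _ _ ch)).
- move=> h ch h_ge0; apply: (state_ge0 psi_state) => y /=.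
  exact: (rinv_ge0 (exist _ h ch)).
- move=> c; apply: (state_cst psi_state) => /=; exact: (rinv_one (exist _ _ c)).
Qed.
End InverseIsomorphism.
End StarIsomorphism.

Section TransferOfStates.
Context {R : realType} {Y Z : topologicalType} {F : Y -> Y}.
Local Notation C := (R[i]).
Context {E : Cfun R Y -> FixAlg R F} {rho : FixAlg R F -> Cfun R Z}.
Hypotheses (E_cesaro : forall h : Cfun R Y, cesaro_unif_cvg F (sval h) (sval (E h)))
  (rho_iso : is_star_iso rho).

Lemma Tmap_fixed (mu : Cfun R Z -> C) (a : FixAlg R F) :
  Tmap rho E mu (fix_fun a) = mu (rho a).
Proof. by rewrite /Tmap (E_fixed E_cesaro a). Qed.

Lemma Tmap_state (mu : Cfun R Z -> C) : is_state mu -> is_state (Tmap rho E mu).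
Proof.
move=> mu_state; rewrite /Tmap; split.
- move=> h1 h2 c1 c2 c; apply: (state_add mu_state); apply: (rho_add rho_iso).
  exact: (E_add E_cesaro (exist _ h1 c1) (exist _ h2 c2) (exist _ _ c)).
- move=> c h c1 ch; apply: (state_scale mu_state c); apply: (rho_scale rho_iso).
  exact: (E_scale E_cesaro c (exist _ h c1) (exist _ _ ch)).
- move=> h ch h_ge0; apply: (state_ge0 mu_state); apply: (rho_ge0 rho_iso).
  exact: (E_ge0 E_cesaro (exist _ h ch)).
- move=> c; rewrite (E_fixed E_cesaro (fixalg_cst 1) (exist _ _ c)) //.
  by apply: (state_cst mu_state); exact: (rho_one rho_iso).
Qed.

Lemma Tmap_invariant (mu : Cfun R Z -> C) : is_invariant F (Tmap rho E mu).
Proof. by move=> h c c'; rewrite /Tmap (E_comp E_cesaro (exist _ h c) (exist _ _ c')). Qed.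

Lemma Tmap_inj (mu nu : Cfun R Z -> C) : Tmap rho E mu = Tmap rho E nu -> mu = nu.
Proof.
have [rinv _ rinvK] := proj1 rho_iso.
move=> eq_T; apply: funext => g.
by rewrite -[g]rinvK -!Tmap_fixed eq_T.
Qed.

(* T is onto the invariant states: an invariant state psi is T of its
   pullback along rho^-1, since psi factors through E. *)
Lemma Tmap_onto (psi : Cfun R Y -> C) : continuous F -> is_state psi ->
  is_invariant F psi -> exists2 mu : Cfun R Z -> C, is_state mu & Tmap rho E mu = psi.
Proof.
move=> F_cont psi_state psi_inv; have [rinv rhoK rinvK] := proj1 rho_iso.
exists (fun g => psi (fix_fun (rinv g))).
  exact: (rinv_state rho_iso _ rhoK rinvK _ psi_state).
apply: funext => h; rewrite /Tmap /= rhoK.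
exact: (state_E E_cesaro _ F_cont psi_state psi_inv h).
Qed.
End TransferOfStates.

Lemma skew_product_continuous {R : realType} {X : topologicalType}
    {theta : X -> X} {f : X -> Circle R} :
  continuous theta -> continuous f -> continuous (skew_product theta f).
Proof.
move=> theta_cont f_cont p.
have val_cont : continuous (@set_val _ [set z : R[i] | `|z| = 1]).
  by move=> z; exact: initial_continuous.
have fst_cont : continuous (fun q : X * Circle R => theta q.1).
  by move=> q; apply: continuous_comp; [exact: cvg_fst | exact: theta_cont].
have snd_cont : continuous (fun q : X * Circle R => circle_mul (f q.1) q.2).
  apply: (@continuous_comp_initial _ _ _ (@set_val _ [set z : R[i] | `|z| = 1])).
  apply: continuous_mulC => q; apply: continuous_comp.
  - by apply: continuous_comp; [exact: cvg_fst | exact: f_cont].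
  - exact: val_cont.
  - exact: cvg_snd.
  - exact: val_cont.
exact: cvg_pair (fst_cont p) (snd_cont p).
Qed.

Theorem mainTheorem19 (R : realType) (X : topologicalType)
  (hX : hausdorff_space X) (cX : compact [set: X])
  (theta : X -> X)
  (htheta : exists g : X -> X,
     [/\ continuous theta, continuous g, cancel theta g & cancel g theta])
  (mu_o : Cfun R X -> R[i]) (hUE : uniquely_ergodic_with theta mu_o)
  (f : X -> Circle R) (hf : continuous f)
  (E : Cfun R (X * Circle R)%type -> FixAlg R (skew_product theta f))
  (hE : forall h : Cfun R (X * Circle R)%type,
     cesaro_unif_cvg (skew_product theta f) (sval h) (sval (E h)))
  (hnontriv : exists h : FixAlg R (skew_product theta f),
     exists p q, sval h p != sval h q)
  (rho : FixAlg R (skew_product theta f) -> Cfun R (Circle R))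
  (hrho : is_star_iso rho) :
  [/\ (forall mu : Cfun R (Circle R) -> R[i], is_state mu ->
         is_state (Tmap rho E mu) /\ is_invariant (skew_product theta f) (Tmap rho E mu)),
      (forall mu nu : Cfun R (Circle R) -> R[i], is_state mu -> is_state nu ->
         Tmap rho E mu = Tmap rho E nu -> mu = nu),
      (forall psi : Cfun R (X * Circle R)%type -> R[i],
         is_state psi -> is_invariant (skew_product theta f) psi ->
         exists2 mu : Cfun R (Circle R) -> R[i], is_state mu & Tmap rho E mu = psi) &
      (forall (mu nu : Cfun R (Circle R) -> R[i]) (t : R[i]),
         is_state mu -> is_state nu -> 0 <= t <= 1 ->
         Tmap rho E (fun g => t * mu g + (1 - t) * nu g)
         = (fun h => t * Tmap rho E mu h + (1 - t) * Tmap rho E nu h))].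
Proof.
have [_ [theta_cont _ _ _]] := htheta.
have F_cont := skew_product_continuous theta_cont hf.
split.
- by move=> mu mu_state; split; [exact: (Tmap_state hE hrho) | exact: (Tmap_invariant hE)].
- by move=> mu nu _ _; exact: (Tmap_inj hE hrho).
- by move=> psi; exact: (Tmap_onto hE hrho psi F_cont).
-
  by [].
Qed.
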